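(* Let $\mathbf T$ be a countable homogeneous tournament and $\mathbf T^*$ an expansion of $\mathbf T$ as in the context such that $\mathrm{Age}(\mathbf T^* )$ has the Ramsey property. Then for every positive integer $n$, the class $\mathrm{Age}(I_n[\mathbf T]^* )$ has the Ramsey property.
   Context: For relational structures $\mathbf A,\mathbf B$ in the same language, $\binom{\mathbf B}{\mathbf A}$ denotes the set of substructures of $\mathbf B$ isomorphic to $\mathbf A$. For $k\ge 1$, $\mathbf C\to(\mathbf B)^{\mathbf A}_k$ means: for every map $c:\binom{\mathbf C}{\mathbf A}\to[k]=\{0,\dots,k-1\}$ there is $\mathbf B'\in\binom{\mathbf C}{\mathbf B}$ such that $c$ is constant on $\binom{\mathbf B'}{\mathbf A}$. A class $\mathcal K$ of finite structures has the Ramsey property if for all $k\ge1$ and all $\mathbf A,\mathbf B\in\mathcal K$ there is $\mathbf C\in\mathcal K$ with $\mathbf C\to(\mathbf B)^{\mathbf A}_k$. The age $\mathrm{Age}(\mathbf F)$ of a structure $\mathbf F$ is the class of finite structures embeddable in $\mathbf F$. A tournament is a directed graph in which every pair of distinct vertices carries exactly one directed edge; it is homogeneous if every isomorphism between finite substructures extends to an automorphism. $\mathbf T=(T,E^{\mathbf T})$ is a countable homogeneous tournament, and $\mathbf T^*$ is an expansion of $\mathbf T$ to a countable relational language $L_{\mathbf T^*}\supseteq\{E,<\}$ in which $<$ is interpreted as a linear order $<^*$ on $T$. For a positive integer $n$, $[n]=\{0,\dots,n-1\}$. The structure $I_n[\mathbf T]^*$ has universe $[n]\times T$ and language $L_{\mathbf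 T^*}\cup\{P_0,\dots,P_{n-1}\}$ ($P_i$ new unary symbols), interpreted as: for each $m$-ary $R\in L_{\mathbf T^*}\setminus\{<\}$ (including $E$), $R((k_1,x_1),\dots,(k_m,x_m))$ iff $k_1=\dots=k_m$ and $R^{\mathbf T^*}(x_1,\dots,x_m)$; $(i,x)<(j,y)$ iff $i<j$, or $i=j$ and $x<^*y$; and $P_i=\{i\}\times T$. (Thus its $\{E\}$-reduct $I_n[\mathbf T]$ is the disjoint union of $n$ copies of $\mathbf T$ with no edges between copies.) *)

From HB Require Import structures.
From mathcomp Require Import all_boot.
Set Implicit Arguments. Unset Strict Implicit. Unset Printing Implicit Defensive.

Record lang := Lang { sym : countType; ar : sym -> nat }.

(* An interpretation of L on a carrier A: for each symbol, a relation on
   lists of elements (only lists of length [ar s] are ever consulted). *)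
Definition interp (L : lang) (A : Type) := forall s : sym L, seq A -> Prop.

Record finstr (L : lang) := FinStr { fcar : finType; frel : interp L fcar }.
Arguments frel [L] f s _.

Definition is_embedding (L : lang) (A B : Type) (IA : interp L A)
    (IB : interp L B) (f : A -> B) : Prop :=
  injective f /\
  forall (s : sym L) (xs : seq A), size xs = ar s -> (IA s xs <-> IB s (map f xs)).

Definition age (L : lang) (T : Type) (I : interp L T) (A : finstr L) : Prop :=
  exists f : fcar A -> T, is_embedding (frel A) I f.

Definition copy (L : lang) (C A : finstr L) (S : {set fcar C}) : Prop :=
  exists f : fcar A -> fcar C,
    is_embedding (frel A) (frel C) f /\ S = f @: [set: fcar A].

Definition arrows (L : lang) (C B A : finstr L) (k : nat) : Prop :=
  forall c : {set fcar C} -> 'I_k,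
    exists S' : {set fcar C}, copy B S' /\
      forall S1 S2 : {set fcar C}, S1 \subset S' -> S2 \subset S' ->
        copy A S1 -> copy A S2 -> c S1 = c S2.

Definition ramsey (L : lang) (K : finstr L -> Prop) : Prop :=
  forall k : nat, 0 < k -> forall A B : finstr L, K A -> K B ->
    exists C : finstr L, K C /\ arrows C B A k.

Definition binrel (L : lang) (T : Type) (I : interp L T) (s : sym L) (x y : T) : Prop :=
  I s [:: x; y].

Definition countable (T : Type) : Prop := exists f : T -> nat, injective f.

Definition tournament (T : Type) (R : T -> T -> Prop) : Prop :=
  (forall x, ~ R x x) /\
  (forall x y, x <> y -> R x y \/ R y x) /\
  (forall x y, R x y -> ~ R y x).

(* Homogeneity: every isomorphism between finite substructures (given by
   injective enumerations a, b of the same length) extends to an automorphism. *)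
Definition homogeneous (T : Type) (R : T -> T -> Prop) : Prop :=
  forall (m : nat) (a b : 'I_m -> T), injective a -> injective b ->
    (forall i j, R (a i) (a j) <-> R (b i) (b j)) ->
    exists sigma : T -> T, bijective sigma /\
      (forall x y, R x y <-> R (sigma x) (sigma y)) /\
      (forall i, sigma (a i) = b i).

Definition strict_linear_order (T : Type) (R : T -> T -> Prop) : Prop :=
  (forall x, ~ R x x) /\
  (forall x y z, R x y -> R y z -> R x z) /\
  (forall x y, x <> y -> R x y \/ R y x).

Definition ext_lang (L : lang) (n : nat) : lang :=
  @Lang (sym L + 'I_n)%type
        (fun s => match s with inl s0 => ar s0 | inr _ => 1 end).

Definition same_copy (n : nat) (T : Type) (xs : seq ('I_n * T)) : bool :=
  match xs with
  | [::] => true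
  | p :: ys => all (fun q => q.1 == p.1) ys
  end.

Definition In_interp (L : lang) (lt : sym L) (n : nat) (T : Type) (I : interp L T)
  : interp (ext_lang L n) ('I_n * T) :=
  fun s xs =>
    match s with
    | inl R =>
        if R == lt then
          match xs with
          | [:: p; q] => (p.1 < q.1)%N \/ (p.1 = q.1 /\ I lt [:: p.2; q.2])
          | _ => False
          end
        else same_copy xs /\ I R (map snd xs)
    | inr i =>
        match xs with
        | [:: p] => p.1 = i
        | _ => False
        end
    end.
Arguments In_interp [L] lt n [T] I s xs.

From Pilot Require Import Defs.
From HB Require Import structures.
From mathcomp Require Import all_boot.
From Stdlib Require Import Classical.
(* Re-import Defs so that its [frel] (relations of a finite structure) takes
   precedence over the [frel] of mathcomp's eqtype. *)
Import Defs.
Set Implicit Arguments. Unset Strict Implicit. Unset Printing Implicit Defensive.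

(* Call a finite structure X "below m" if it embeds into I_n[T]^* with all
   points in the copies 0, ..., m-1; the age of I_n[T]^* is the class of
   structures below n.  We show by induction on m <= n that the class of
   structures below m is Ramsey.  A structure below j+1 splits into its
   lower part, the points in copies < j (a structure below j), and its top
   part, the points in copy j, whose second coordinates form a structure in
   the age of T^*.  Conversely, a structure C1 below j and a structure C2 in
   the age of T^* glue side by side into a structure below j+1 whose copies
   of X are exactly the sums S1 + S2 of copies of the parts (copy_glue_split,
   copy_glue_join).  For such sums the product Ramsey lemma arrows_sum
   combines a Ramsey witness for the lower parts (with one colour per
   colouring of the subsets of C2) with a Ramsey witness for the top parts. *)

Definition same_pullback (L : lang) (X C : Type) (IC : interp L C) (u v : X -> C) : Prop :=
  forall (s : sym L) (xs : seq X), size xs = ar s -> (IC s (map u xs) <-> IC s (map v xs)).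

Lemma embedding_relative (L : lang) (A B C : Type) (IA : interp L A) (IB : interp L B)
    (IC : interp L C) (eA : A -> C) (eB : B -> C) (f : A -> B) :
  is_embedding IA IC eA -> is_embedding IB IC eB ->
  is_embedding IA IB f <-> injective f /\ same_pullback IC eA (eB \o f).
Proof.
move=> [_ HA] [_ HB]; split=> -[f_inj Hf]; split=> // s xs Hs.
  by rewrite -HA // map_comp -HB ?size_map //; exact: Hf.
by rewrite HA // HB ?size_map // -map_comp; exact: Hf.
Qed.

Lemma ramsey_equiv (L : lang) (K K' : finstr L -> Prop) :
  (forall X, K X <-> K' X) -> ramsey K -> ramsey K'.
Proof.
move=> KK' RK k k_gt0 A B /KK' KA /KK' KB.
by have [C [/KK' KC arr]] := RK k k_gt0 A B KA KB; exists C.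
Qed.

Lemma lift_tuple (X : Type) (P : pred X) (xs : seq X) :
  all P xs -> exists ys : seq {x | P x}, map val ys = xs.
Proof.
elim: xs => [|x xs IH] /=; first by exists [::].
by case/andP=> Px /IH [ys <-]; exists (exist _ x Px :: ys).
Qed.

Definition sum_set (A B : finType) (S1 : {set A}) (S2 : {set B}) : {set A + B} :=
  inl @: S1 :|: inr @: S2.

Lemma sum_set_subset (A B : finType) (S1 S1' : {set A}) (S2 S2' : {set B}) :
  sum_set S1 S2 \subset sum_set S1' S2' -> S1 \subset S1' /\ S2 \subset S2'.
Proof.
move/subsetP=> sub; split; apply/subsetP => x Sx.
  have /sub : inl x \in sum_set S1 S2 by rewrite inE imset_f.
  by rewrite inE => /orP[/imsetP[y Sy [->]] | /imsetP[]].
have /sub : inr x \in sum_set S1 S2 by rewrite inE orbC imset_f.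
by rewrite inE => /orP[/imsetP[] | /imsetP[y Sy [->]]].
Qed.

Section SumDecomposition.
Variables (X A B : finType) (P : pred X).

Definition decomposes (f : X -> A + B) (f1 : {x | P x} -> A) (f2 : {x | ~~ P x} -> B) :=
  (forall y, f (val y) = inl (f1 y)) /\ (forall y, f (val y) = inr (f2 y)).

Lemma join_exists (f1 : {x | P x} -> A) (f2 : {x | ~~ P x} -> B) :
  exists f, decomposes f f1 f2.
Proof.
have /fin_all_exists [f Hf] : forall x, exists z : A + B,
    (forall h : P x, z = inl (f1 (exist _ x h))) /\
    (forall h : ~~ P x, z = inr (f2 (exist _ x h))).
  move=> x; case/orP: (orbN (P x)) => h.
    exists (inl (f1 (exist _ x h))); split=> h'; last by case/negP: h'.
    by rewrite (bool_irrelevance h' h).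
  exists (inr (f2 (exist _ x h))); split=> h'; first by case/negP: h.
  by rewrite (bool_irrelevance h' h).
by exists f; split=> -[x h]; [exact: (Hf x).1 h | exact: (Hf x).2 h].
Qed.

Lemma split_exists (f : X -> A + B) :
  (forall x, P x -> exists a, f x = inl a) -> (forall x, ~~ P x -> exists b, f x = inr b) ->
  exists f1 f2, decomposes f f1 f2.
Proof.
move=> fl fr.
have /fin_all_exists [f1 H1] : forall y : {x | P x}, exists a, f (val y) = inl a.
  by case=> x h; exact: fl.
have /fin_all_exists [f2 H2] : forall y : {x | ~~ P x}, exists b, f (val y) = inr b.
  by case=> x h; exact: fr.
by exists f1, f2.
Qed.

Variables (f : X -> A + B) (f1 : {x | P x} -> A) (f2 : {x | ~~ P x} -> B).
Hypothesis f_dec : decomposes f f1 f2.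

Lemma decomposes_cases x :
  (exists2 y, val y = x & f x = inl (f1 y)) \/ (exists2 y, val y = x & f x = inr (f2 y)).
Proof.
case: f_dec => D1 D2; case/orP: (orbN (P x)) => h; [left | right];
  exists (exist _ x h) => //; [exact: D1 (exist _ x h) | exact: D2 (exist _ x h)].
Qed.

Lemma decomposes_injective : injective f <-> injective f1 /\ injective f2.
Proof.
case: f_dec => D1 D2; split=> [f_inj | [i1 i2] x x'].
  by split=> y y' e; apply/val_inj/f_inj; rewrite ?D1 ?D2 e.
case: (decomposes_cases x) => -[y <- ->]; case: (decomposes_cases x') => -[y' <- ->] //.
  by case=> /i1 ->.
by case=> /i2 ->.
Qed.

Lemma decomposes_image : f @: setT = sum_set (f1 @: setT) (f2 @: setT).
Proof.
case: f_dec => D1 D2.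
apply/setP => z; apply/imsetP/setUP => [[x _ ->] | [] /imsetP[c /imsetP[y _ ->] ->]].
- by case: (decomposes_cases x) => -[y _ ->]; [left | right]; rewrite !imset_f.
- by exists (val y); rewrite ?D1.
- by exists (val y); rewrite ?D2.
Qed.

End SumDecomposition.

(* A copy S1 of A1 is coloured by the colouring S2 |-> c (S1 + S2). *)
Section ProductRamsey.
Variables (L1 L2 L : lang) (A1 B1 C1 : finstr L1) (A2 B2 C2 : finstr L2) (A B : finstr L).
Variables (IC : interp L (fcar C1 + fcar C2)) (k : nat).
Local Notation C := (@FinStr L _ IC).

Hypothesis copyA_split : forall S, @copy L C A S ->
  exists S1 S2, [/\ S = sum_set S1 S2, copy A1 S1 & copy A2 S2].
Hypothesis copyB_join : forall S1 S2, copy B1 S1 -> copy B2 S2 -> @copy L C B (sum_set S1 S2).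

Lemma arrows_sum :
  arrows C1 B1 A1 #|{ffun {set fcar C2} -> 'I_k}| -> arrows C2 B2 A2 k -> arrows C B A k.
Proof.
move=> arr1 arr2 c.
pose g S1 : {ffun {set fcar C2} -> 'I_k} := [ffun S2 => c (sum_set S1 S2)].
have [S1' [cB1 H1]] := arr1 (fun S1 => enum_rank (g S1)).
have g_const (Sa1 Sb1 : {set fcar C1}) (S2 : {set fcar C2}) :
    Sa1 \subset S1' -> Sb1 \subset S1' -> copy A1 Sa1 -> copy A1 Sb1 ->
    c (sum_set Sa1 S2) = c (sum_set Sb1 S2).
  move=> sa sb ca cb; have /enum_rank_inj gab := H1 _ _ sa sb ca cb.
  by have := congr1 (fun h : {ffun {set fcar C2} -> 'I_k} => h S2) gab; rewrite !ffunE.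
have split_inside (S2' : {set fcar C2}) (Sa : {set fcar C}) :
    Sa \subset sum_set S1' S2' -> @copy L C A Sa ->
    exists Sa1 Sa2, [/\ Sa = sum_set Sa1 Sa2, Sa1 \subset S1', Sa2 \subset S2',
      copy A1 Sa1 & copy A2 Sa2].
  move=> sa /copyA_split [Sa1 [Sa2 [Sa_eq ca1 ca2]]]; rewrite Sa_eq in sa.
  by have [sa1 sa2] := sum_set_subset sa; exists Sa1, Sa2.
(* If some copy S0 of A1 lies in S1', every copy of A in S1' + S2' gets the
   colour c (S0 + S2) of its top part S2; otherwise there are no such copies. *)
case: (classic (exists S0 : {set fcar C1}, S0 \subset S1' /\ copy A1 S0))
  => [[S0 [sS0 cS0]] | noA1].
  have [S2' [cB2 H2]] := arr2 (fun S2 => c (sum_set S0 S2)).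
  exists (sum_set S1' S2'); split; first exact: copyB_join.
  move=> Sa Sb /split_inside sa /split_inside sb /sa[Sa1 [Sa2 [-> sa1 sa2 ca1 ca2]]].
  case/sb=> Sb1 [Sb2 [-> sb1 sb2 cb1 cb2]].
  rewrite (g_const _ _ _ sa1 sS0 ca1 cS0) (g_const _ _ _ sb1 sS0 cb1 cS0).
  exact: H2.
have [S2' [cB2 _]] := arr2 (fun S2 => c (sum_set set0 S2)).
exists (sum_set S1' S2'); split; first exact: copyB_join.
move=> Sa Sb /split_inside sa _ /sa[Sa1 [Sa2 [_ sa1 _ ca1 _]]].
by case: noA1; exists Sa1.
Qed.

End ProductRamsey.

Section Layers.
Variables (L : lang) (lt : sym L) (T : Type) (I : interp L T) (n : nat).
Hypothesis lt_binary : ar lt = 2.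
Local Notation Ln := (ext_lang L n).
Local Notation J := (In_interp lt n I).

Definition same_layer (X : Type) (u v : X -> 'I_n * T) : Prop :=
  forall x, (u x).1 = (v x).1.

Definition same_within_layers (X : Type) (u v : X -> 'I_n * T) : Prop :=
  forall (s : sym L) (xs : seq X), size xs = ar s -> same_copy (map u xs) ->
    (I s (map (snd \o u) xs) <-> I s (map (snd \o v) xs)).

Lemma same_copy_layer (X : Type) (u v : X -> 'I_n * T) (xs : seq X) :
  same_layer u v -> same_copy (map u xs) = same_copy (map v xs).
Proof.
by move=> uv; case: xs => //= x xs; rewrite !all_map; apply: eq_all => y /=; rewrite !uv.
Qed.

(* The unary predicates P_i see the copy of each point. *)
Lemma same_pullback_layer (X : Type) (u v : X -> 'I_n * T) :
  same_pullback J u v -> same_layer u v.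
Proof. by move=> uv x; have /= [/(_ erefl) ->] := uv (inr (u x).1) [:: x] erefl. Qed.

(* The structure induced from I_n[T]^* is determined by the copies of the
   points and the L-structure inside each copy; this uses that < is binary,
   since between different copies < is read off the copy indices alone. *)
Lemma same_pullbackP (X : Type) (u v : X -> 'I_n * T) :
  same_pullback J u v <-> same_layer u v /\ same_within_layers u v.
Proof.
split=> [uv | [uv_layer uv_within] [R | i] xs Hs /=]; last first.
- by case: xs Hs => [|a [|b l]] //= _; rewrite uv_layer.
- rewrite -!map_comp; case: eqP => [eR | _]; last first.
    rewrite (same_copy_layer xs uv_layer).
    by split=> -[sc Rxs]; split=> //; apply/(uv_within R xs Hs);
      rewrite ?(same_copy_layer xs uv_layer).
  subst R; rewrite /= lt_binary in Hs; case: xs Hs => [|a [|b [|c l]]] //= _.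
  rewrite -!uv_layer; case: (ltngtP (u a).1 (u b).1) => ab.
  + by split=> _; left.
  + by split=> -[// | [e _]]; move: ab; rewrite e ltnn.
  have sc : same_copy [seq u x | x <- [:: a; b]].
    by rewrite /= andbT eq_sym; apply/eqP/val_inj.
  have /= ab_lt := uv_within lt [:: a; b] (esym lt_binary) sc.
  by split=> -[// | [e ltab]]; right; split=> //; apply/ab_lt.
have uv_layer := same_pullback_layer uv.
split=> // s xs Hs sc; have := uv (inl s) xs Hs; rewrite /= -!map_comp.
case: eqP => [e | _]; last first.
  rewrite -(same_copy_layer xs uv_layer) sc.
  by move=> uv_s; split=> Is;
    [case: (uv_s.1 (conj erefl Is)) | case: (uv_s.2 (conj erefl Is))].
subst s; rewrite lt_binary in Hs; case: xs Hs sc => [|a [|b [|c l]]] //= _.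
rewrite andbT -!uv_layer => /eqP ->; rewrite ltnn => uv_lt.
by split=> Is; [case: (uv_lt.1 (or_intror (conj erefl Is)))
              | case: (uv_lt.2 (or_intror (conj erefl Is)))] => // -[].
Qed.

Lemma same_copy_cons (X : Type) (u : X -> 'I_n * T) (x0 : X) (xs : seq X) :
  same_copy (map u (x0 :: xs)) = all (fun x => (u x).1 == (u x0).1) (x0 :: xs).
Proof. by rewrite /= all_map eqxx. Qed.

Lemma same_copy_all (X : Type) (u : X -> 'I_n * T) (i : 'I_n) (xs : seq X) :
  all (fun x => (u x).1 == i) xs -> same_copy (map u xs).
Proof.
case: xs => //= x0 xs /andP[/eqP u0 ux]; rewrite all_map.
by apply: sub_all ux => y /=; rewrite u0.
Qed.

Section Glue.
Variable j : 'I_n.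

Definition lower_part (X : finstr Ln) (eX : fcar X -> 'I_n * T) : finstr Ln :=
  @FinStr Ln {x : fcar X | (eX x).1 < j} (fun s xs => J s (map (eX \o val) xs)).

Definition top_part (X : finstr Ln) (eX : fcar X -> 'I_n * T) : finstr L :=
  @FinStr L {x : fcar X | ~~ ((eX x).1 < j)} (fun s xs => I s (map (snd \o eX \o val) xs)).

Definition glue_map (C1 C2 : Type) (e1 : C1 -> 'I_n * T) (e2 : C2 -> T) (z : C1 + C2) :
    'I_n * T :=
  match z with inl c => e1 c | inr d => (j, e2 d) end.

Definition glue (C1 : finstr Ln) (C2 : finstr L) (e1 : fcar C1 -> 'I_n * T)
    (e2 : fcar C2 -> T) : finstr Ln :=
  @FinStr Ln (fcar C1 + fcar C2)%type (fun s xs => J s (map (glue_map e1 e2) xs)).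

Lemma layer_top (X : Type) (eX : X -> 'I_n * T) (x : X) :
  (eX x).1 < j.+1 -> ~~ ((eX x).1 < j) -> (eX x).1 = j.
Proof. by move=> le_j not_lt; apply/val_inj/eqP; rewrite eqn_leq -ltnS le_j leqNgt. Qed.

Section Embeddings.
Variables (X : finstr Ln) (eX : fcar X -> 'I_n * T).
Variables (C1 : finstr Ln) (e1 : fcar C1 -> 'I_n * T) (C2 : finstr L) (e2 : fcar C2 -> T).
Hypotheses (eX_emb : is_embedding (frel X) J eX) (eX_layers : forall x, (eX x).1 < j.+1).
Hypotheses (e1_emb : is_embedding (frel C1) J e1) (e1_layers : forall c, (e1 c).1 < j).
Hypothesis e2_emb : is_embedding (frel C2) I e2.

Lemma lower_part_embedding : is_embedding (frel (lower_part eX)) J (eX \o val).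
Proof. by split=> //; apply: inj_comp eX_emb.1 val_inj. Qed.

Lemma top_part_embedding : is_embedding (frel (top_part eX)) I (snd \o eX \o val).
Proof.
split=> // -[x nx] [y ny] /= e; apply/val_inj/eX_emb.1 => /=.
apply: injective_projections => //.
by rewrite (layer_top (eX_layers x) nx) (layer_top (eX_layers y) ny).
Qed.

Lemma glue_embedding : is_embedding (frel (glue e1 e2)) J (glue_map e1 e2).
Proof.
split=> // -[c|d] [c'|d'] /= e.
- by rewrite (e1_emb.1 _ _ e).
- by have := e1_layers c; rewrite e /= ltnn.
- by have := e1_layers c'; rewrite -e /= ltnn.
- by case: e => /e2_emb.1 ->.
Qed.

Section Decomposed.
Variables (f : fcar X -> fcar C1 + fcar C2).
Variables (f1 : fcar (lower_part eX) -> fcar C1) (f2 : fcar (top_part eX) -> fcar C2).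
Hypothesis f_dec : @decomposes (fcar X) _ _ (fun x => (eX x).1 < j) f f1 f2.

Lemma decomposed_layer :
  same_layer eX (glue_map e1 e2 \o f) <-> same_layer (eX \o val) (e1 \o f1).
Proof.
case: (f_dec) => D1 _; split=> H y; first by have := H (val y); rewrite /= D1.
case: (decomposes_cases f_dec y) => -[z <- /= ->]; first exact: H.
exact: layer_top (eX_layers _) (valP z).
Qed.

Lemma decomposed_within :
  same_within_layers eX (glue_map e1 e2 \o f) <->
  same_within_layers (eX \o val) (e1 \o f1) /\ same_pullback I (snd \o eX \o val) (e2 \o f2).
Proof.
case: f_dec => D1 D2.
have map_lower (ys : seq (fcar (lower_part eX))) :
    map (snd \o (glue_map e1 e2 \o f)) (map val ys) = map (snd \o (e1 \o f1)) ys.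
  by rewrite -map_comp; apply: eq_map => y /=; rewrite D1.
have map_top (ys : seq (fcar (top_part eX))) :
    map (snd \o (glue_map e1 e2 \o f)) (map val ys) = map (e2 \o f2) ys.
  by rewrite -map_comp; apply: eq_map => y /=; rewrite D2.
split=> [H | [H1 H2] s [|x0 xs] Hs sc //].
  split=> [s ys Hs sc | s ys Hs].
    rewrite -map_lower (map_comp (snd \o eX) val); apply: H; first by rewrite size_map.
    by rewrite -map_comp.
  rewrite -map_top (map_comp (snd \o eX) val); apply: H; first by rewrite size_map.
  apply: (@same_copy_all _ _ j); rewrite all_map; apply/allP => -[x nx] _ /=.
  by rewrite layer_top.
move: (sc); rewrite same_copy_cons => /allP same0.
case: (boolP ((eX x0).1 < j)) => x0_low.
  have [ys ys_eq] : exists ys : seq (fcar (lower_part eX)), map val ys = x0 :: xs.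
    by apply/lift_tuple/allP => x /same0 /eqP ->.
  rewrite -ys_eq in Hs sc *; rewrite map_lower -map_comp.
  by apply: H1; [rewrite -Hs size_map | rewrite map_comp].
have [ys ys_eq] : exists ys : seq (fcar (top_part eX)), map val ys = x0 :: xs.
  by apply/lift_tuple/allP => x /same0 /eqP ->.
rewrite -ys_eq in Hs *; rewrite map_top -map_comp.
by apply: H2; rewrite -Hs size_map.
Qed.

Lemma glue_embeddingP :
  is_embedding (frel X) (frel (glue e1 e2)) f <->
  is_embedding (frel (lower_part eX)) (frel C1) f1 /\
  is_embedding (frel (top_part eX)) (frel C2) f2.
Proof.
rewrite (embedding_relative f eX_emb glue_embedding).
rewrite (embedding_relative f1 lower_part_embedding e1_emb).
rewrite (embedding_relative f2 top_part_embedding e2_emb).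
rewrite (decomposes_injective f_dec) !same_pullbackP decomposed_layer decomposed_within.
tauto.
Qed.
End Decomposed.

Lemma copy_glue_split (S : {set fcar (glue e1 e2)}) :
  @copy Ln (glue e1 e2) X S ->
  exists S1 S2, [/\ S = sum_set S1 S2, copy (lower_part eX) S1 & copy (top_part eX) S2].
Proof.
case=> f [f_emb ->].
have [_ /same_pullbackP[f_layer _]] :=
  (embedding_relative f eX_emb glue_embedding).1 f_emb.
have [f1 [f2 f_dec]] : exists f1 f2,
    @decomposes (fcar X) _ _ (fun x => (eX x).1 < j) f f1 f2.
  apply: split_exists => x /=; rewrite (f_layer x) /=; case: (f x) => [c | d] /=.
  - by exists c.
  - by rewrite ltnn.
  - by rewrite e1_layers.
  - by exists d.
have [f1_emb f2_emb] := (glue_embeddingP f_dec).1 f_emb.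
exists (f1 @: setT), (f2 @: setT); split; first exact: decomposes_image f_dec.
  by exists f1.
by exists f2.
Qed.

Lemma copy_glue_join (S1 : {set fcar C1}) (S2 : {set fcar C2}) :
  copy (lower_part eX) S1 -> copy (top_part eX) S2 ->
  @copy Ln (glue e1 e2) X (sum_set S1 S2).
Proof.
case=> f1 [f1_emb ->] [f2 [f2_emb ->]].
have [f f_dec] := @join_exists (fcar X) _ _ (fun x => (eX x).1 < j) f1 f2.
exists f; split; first exact/(glue_embeddingP f_dec).
by rewrite (decomposes_image f_dec).
Qed.
End Embeddings.
End Glue.

Definition in_layers_below (m : nat) (X : finstr Ln) : Prop :=
  exists e : fcar X -> 'I_n * T, is_embedding (frel X) J e /\ forall x, (e x).1 < m.

Lemma in_layers_below_n (X : finstr Ln) : in_layers_below n X <-> age J X.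
Proof.
split=> [[e [e_emb _]] | [e e_emb]]; first by exists e.
by exists e; split=> // x; exact: ltn_ord.
Qed.

(* Structures below 0 are empty, so any B is its own Ramsey witness. *)
Lemma ramsey_layers_below0 : ramsey (in_layers_below 0).
Proof.
move=> k _ A B _ [eB [eB_emb eB_layers]]; exists B; split; first by exists eB.
move=> c; exists setT; split.
  by exists id; rewrite imset_id; split=> //; split=> // s xs _; rewrite map_id.
move=> S1 S2 _ _ _ _; congr c; apply/setP => x.
by have := eB_layers x.
Qed.

Lemma ramsey_layers_below_step (j : 'I_n) :
  ramsey (age I) -> ramsey (in_layers_below j) -> ramsey (in_layers_below j.+1).
Proof.
move=> ramseyI ramsey_j k k_gt0 A B [eA [eA_emb eA_layers]] [eB [eB_emb eB_layers]].
have top_age (X : finstr Ln) (eX : fcar X -> 'I_n * T) :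
    is_embedding (frel X) J eX -> (forall x, (eX x).1 < j.+1) -> age I (top_part j eX).
  by move=> eX_emb eX_layers; exists (snd \o eX \o val); exact: top_part_embedding.
have lower_below (X : finstr Ln) (eX : fcar X -> 'I_n * T) :
    is_embedding (frel X) J eX -> in_layers_below j (lower_part j eX).
  by move=> eX_emb; exists (eX \o val); split; [exact: lower_part_embedding | case].
have [C2 [[e2 e2_emb] arrows2]] :=
  ramseyI k k_gt0 _ _ (top_age _ _ eA_emb eA_layers) (top_age _ _ eB_emb eB_layers).
have colours_gt0 : 0 < #|{ffun {set fcar C2} -> 'I_k}|.
  by apply/card_gt0P; exists [ffun=> Ordinal k_gt0].
have [C1 [[e1 [e1_emb e1_layers]] arrows1]] :=
  ramsey_j _ colours_gt0 _ _ (lower_below _ _ eA_emb) (lower_below _ _ eB_emb).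
exists (glue j e1 e2); split.
  exists (glue_map j e1 e2); split; first exact: glue_embedding.
  by case=> [c | d] /=; rewrite ltnS // ltnW.
apply: arrows_sum arrows1 arrows2.
  exact: copy_glue_split.
exact: copy_glue_join.
Qed.

Lemma ramsey_layers_below (m : nat) :
  m <= n -> ramsey (age I) -> ramsey (in_layers_below m).
Proof.
move=> le_mn ramseyI; elim: m le_mn => [_ | m IHm lt_mn].
  exact: ramsey_layers_below0.
exact: (@ramsey_layers_below_step (Ordinal lt_mn) ramseyI (IHm (ltnW lt_mn))).
Qed.
End Layers.

Theorem theorem6p1 (L : lang) (E lt : sym L) (T : Type) (I : interp L T) (n : nat) :
  E <> lt -> ar E = 2 -> ar lt = 2 ->
  countable T ->
  tournament (binrel I E) ->
  homogeneous (binrel I E) ->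
  strict_linear_order (binrel I lt) ->
  ramsey (age I) ->
  0 < n ->
  ramsey (age (In_interp lt n I)).
Proof.
move=> _ _ lt_binary _ _ _ _ ramseyI _.
apply: ramsey_equiv (ramsey_layers_below lt_binary (leqnn n) ramseyI).
exact: in_layers_below_n.
Qed.
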